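(* Let $n\ge2$ be an integer. No configuration of $\Omega_n$ contains the tile $j_n^{1,1,1,1}$ at a position $\mathbf m$ together with the tile $\hat g_n^{\,n}$ at position $\mathbf m-\mathbf e_2$ (directly below it), and no configuration of $\Omega_n$ contains the tile $j_n^{0,1,1,1}$ at a position $\mathbf m$ together with the tile $\hat g_n^{\,n-1}$ at position $\mathbf m-\mathbf e_2$.
   Context: $V_n=\{(v_0,v_1,v_2)\in\mathbb{Z}^3: 0\le v_0\le v_1\le 1,\ v_1\le v_2\le n+1\}$, elements written as words $v_0v_1v_2$. A Wang tile is $t=(a,b,c,d)$ with $\mathrm{RIGHT}(t)=a$, $\mathrm{TOP}(t)=b$, $\mathrm{LEFT}(t)=c$, $\mathrm{BOTTOM}(t)=d$; $\hat t=(b,a,d,c)$, $\hat S=\{\hat t:t\in S\}$. Define (as (right, top, left, bottom)): $W_n=\{(11(i+1),11(j+1),11i,11j):1\le i,j\le n\}$; $b_n^i=(00(i+1),111,00i,11n)$, $B_n=\{b_n^i:0\le i\le n-1\}$; $g_n^i=(01(i+1),111,00i,11(n+1))$, $G_n=\{g_n^i:0\le i\le n\}$; $y_n^i=(01(i+1),112,01i,11(n+1))$, $Y_n=\{y_n^i:1\le i\le n\}$; $j_n^{k,l,r,s}=((0,k,l),(0,r,s),(0,s,r+n),(0,l,k+n))$ for $(k,l),(r,s)\in\{(0,0),(0,1),(1,1)\}$; $J_n$ = these 9 tiles minus $j_n^{0,0,1,1},j_n^{1,1,0,0}$. $\mathcal{T}_n=W_n\cup B_n\cup G_n\cup Y_n\cup\hat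 B_n\cup\hat G_n\cup\hat Y_n\cup J_n$; $\Omega_n$ is the set of configurations $x:\mathbb{Z}^2\to\mathcal T_n$ with $\mathrm{RIGHT}(x(\mathbf m))=\mathrm{LEFT}(x(\mathbf m+\mathbf e_1))$ and $\mathrm{TOP}(x(\mathbf m))=\mathrm{BOTTOM}(x(\mathbf m+\mathbf e_2))$ for all $\mathbf m$. *)

From Stdlib Require Import ZArith Arith Lia.

(* A colour v0 v1 v2 (an element of V_n; all colours used below lie in V_n). *)
Definition color : Type := (nat * nat * nat)%type.

(* A Wang tile t = (a,b,c,d) = (RIGHT, TOP, LEFT, BOTTOM). *)
Record tile : Type := Tile { RIGHT : color; TOP : color; LEFT : color; BOTTOM : color }.

Definition hat (t : tile) : tile := Tile (TOP t) (RIGHT t) (BOTTOM t) (LEFT t).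

Definition w_tile (n i j : nat) : tile :=
  Tile (1,1,i+1) (1,1,j+1) (1,1,i) (1,1,j).
Definition b_tile (n i : nat) : tile :=
  Tile (0,0,i+1) (1,1,1) (0,0,i) (1,1,n).
Definition g_tile (n i : nat) : tile :=
  Tile (0,1,i+1) (1,1,1) (0,0,i) (1,1,n+1).
Definition y_tile (n i : nat) : tile :=
  Tile (0,1,i+1) (1,1,2) (0,1,i) (1,1,n+1).
Definition j_tile (n k l r s : nat) : tile :=
  Tile (0,k,l) (0,r,s) (0,s,r+n) (0,l,k+n).

Definition in_W (n : nat) (t : tile) : Prop :=
  exists i j, 1 <= i <= n /\ 1 <= j <= n /\ t = w_tile n i j.
Definition in_B (n : nat) (t : tile) : Prop :=
  exists i, i <= n - 1 /\ t = b_tile n i.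
Definition in_G (n : nat) (t : tile) : Prop :=
  exists i, i <= n /\ t = g_tile n i.
Definition in_Y (n : nat) (t : tile) : Prop :=
  exists i, 1 <= i <= n /\ t = y_tile n i.

Definition adm_pair (k l : nat) : Prop :=
  (k = 0 /\ l = 0) \/ (k = 0 /\ l = 1) \/ (k = 1 /\ l = 1).

Definition in_J (n : nat) (t : tile) : Prop :=
  exists k l r s, adm_pair k l /\ adm_pair r s /\
    ~ (k = 0 /\ l = 0 /\ r = 1 /\ s = 1) /\
    ~ (k = 1 /\ l = 1 /\ r = 0 /\ s = 0) /\
    t = j_tile n k l r s.

Definition in_T (n : nat) (t : tile) : Prop :=
  in_W n t \/ in_B n t \/ in_G n t \/ in_Y n t \/
  (exists u, in_B n u /\ t = hat u) \/
  (exists u, in_G n u /\ t = hat u) \/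
  (exists u, in_Y n u /\ t = hat u) \/
  in_J n t.

Definition in_Omega (n : nat) (x : Z * Z -> tile) : Prop :=
  forall a b : Z,
    in_T n (x (a, b)) /\
    RIGHT (x (a, b)) = LEFT (x ((a + 1)%Z, b)) /\
    TOP (x (a, b)) = BOTTOM (x (a, (b + 1)%Z)).

From Stdlib Require Import ZArith Lia List Bool.
Import ListNotations.

(* The first coordinate of a colour, its lead, is the same on the top and on the bottom of
   every tile of T_n, so it is constant along each column of a configuration.  A tile with
   right colour (0,h,c+2) is a B-, G- or Y-tile: its column has lead 1 and its left colour is
   (0,h',c+1); in a column of lead 1 a right colour (1,1,c+1) forces a W-tile, with c >= 1
   and left colour (1,1,c).  Hence three stacked left colours (0,h,k+2), (1,1,k+2),
   (1,1,k+1) reappear one column further left with k decreased by one, which is impossible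
   at k = 0.  A tile j^{k,l,1,1} above hat g^i shows (0,1,n+1) above (1,1,n+1), and for
   i >= 2 the tile below hat g^i must be hat b^{i-1}, with left colour (1,1,n): this is such
   a staircase.  The remaining case, n = 2 with hat g^1, below which a J-tile may also fit,
   is refuted by arc consistency on a finite window around the pattern. *)

Definition lead (c : color) : nat := fst (fst c).

Ltac destruct_in_T H :=
  destruct H as [(i & j & Hi & Hj & ->) | [(i & Hi & ->) | [(i & Hi & ->) | [(i & Hi & ->) |
    [(u & (i & Hi & ->) & ->) | [(u & (i & Hi & ->) & ->) | [(u & (i & Hi & ->) & ->) |
    (k & l & r & s & Hkl & Hrs & _ & _ & ->)]]]]]]];
  [ .. | destruct Hkl as [[-> ->] | [[-> ->] | [-> ->]]];
         destruct Hrs as [[-> ->] | [[-> ->] | [-> ->]]] ];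
  cbn in *.

Section TilesOfT.
Variables (n : nat) (t : tile).
Hypothesis Ht : in_T n t.

Lemma lead_BOTTOM : lead (BOTTOM t) = lead (TOP t).
Proof. destruct_in_T Ht; reflexivity. Qed.

Lemma LEFT_of_RIGHT_lead0 h c :
  RIGHT t = (0, h, S (S c)) -> lead (TOP t) = 1 /\ exists h', LEFT t = (0, h', S c).
Proof.
  intro HR; destruct_in_T Ht; injection HR; intros; subst; try lia;
    split; trivial; eexists; f_equal; f_equal; lia.
Qed.

Lemma LEFT_of_RIGHT_lead1 c :
  lead (TOP t) = 1 -> RIGHT t = (1, 1, S c) -> 1 <= c /\ LEFT t = (1, 1, c).
Proof.
  intros HT HR; destruct_in_T Ht; try discriminate; injection HR; intros; try lia;
    split; [lia | f_equal; lia].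
Qed.

Lemma LEFT_of_TOP_00 c : TOP t = (0, 0, S (S c)) -> LEFT t = (1, 1, n).
Proof. intro HT; destruct_in_T Ht; injection HT; intros; try lia; reflexivity. Qed.

End TilesOfT.

Section Configuration.
Variables (n : nat) (x : Z * Z -> tile).
Hypothesis Hx : in_Omega n x.
Local Open Scope Z_scope.

Lemma RIGHT_left_neighbour a b : RIGHT (x (a - 1, b)) = LEFT (x (a, b)).
Proof. destruct (Hx (a - 1) b) as (_ & HR & _); now rewrite Z.sub_add in HR. Qed.

Lemma TOP_lower_neighbour a b : TOP (x (a, b - 1)) = BOTTOM (x (a, b)).
Proof. destruct (Hx a (b - 1)) as (_ & _ & HT); now rewrite Z.sub_add in HT. Qed.

Lemma lead_TOP_lower_neighbour a b : lead (TOP (x (a, b - 1))) = lead (TOP (x (a, b))).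
Proof. rewrite TOP_lower_neighbour; apply (lead_BOTTOM n), Hx. Qed.

Definition LEFT_staircase (a b : Z) (k : nat) : Prop :=
  exists h, LEFT (x (a, b)) = (0, h, S (S k))%nat /\
    LEFT (x (a, b - 1)) = (1, 1, S (S k))%nat /\
    LEFT (x (a, b - 2)) = (1, 1, S k)%nat.

Lemma LEFT_staircase_shift a b k :
  LEFT_staircase a b k -> exists k', k = S k' /\ LEFT_staircase (a - 1) b k'.
Proof.
  intros (h & H0 & H1 & H2).
  replace (b - 2) with (b - 1 - 1) in H2 by lia.
  rewrite <- RIGHT_left_neighbour in H0, H1, H2.
  destruct (LEFT_of_RIGHT_lead0 n _ (proj1 (Hx _ _)) _ _ H0) as [Hlead0 [h' H0']].
  assert (Hlead1 : lead (TOP (x (a - 1, b - 1))) = 1%nat)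
    by now rewrite lead_TOP_lower_neighbour.
  assert (Hlead2 : lead (TOP (x (a - 1, b - 1 - 1))) = 1%nat)
    by now rewrite lead_TOP_lower_neighbour.
  destruct (LEFT_of_RIGHT_lead1 n _ (proj1 (Hx _ _)) _ Hlead1 H1) as [_ H1'].
  destruct (LEFT_of_RIGHT_lead1 n _ (proj1 (Hx _ _)) _ Hlead2 H2) as [Hk H2'].
  destruct k as [| k']; [lia |].
  exists k'; split; [reflexivity |].
  exists h'; repeat split; [exact H0' | exact H1' |].
  now replace (b - 2) with (b - 1 - 1) by lia.
Qed.

Lemma no_LEFT_staircase k : forall a b, ~ LEFT_staircase a b k.
Proof.
  induction k as [| k IH]; intros a b Hs;
    destruct (LEFT_staircase_shift a b _ Hs) as (k' & Hk & Hs').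
  - discriminate.
  - injection Hk as ->; exact (IH _ _ Hs').
Qed.

Lemma j_over_hat_g_absurd a b k l i :
  (2 <= i <= n)%nat ->
  x (a, b) = j_tile n k l 1 1 -> x (a, b - 1) = hat (g_tile n i) -> False.
Proof.
  intros Hi Hj Hg.
  assert (H2 : LEFT (x (a, b - 2)) = (1, 1, n)%nat).
  { replace (b - 2) with (b - 1 - 1) by lia.
    apply (LEFT_of_TOP_00 n _ (proj1 (Hx _ _)) (i - 2)).
    rewrite TOP_lower_neighbour, Hg; cbn; do 2 f_equal; lia. }
  apply (no_LEFT_staircase (n - 1) a b); exists 1%nat; repeat split.
  - rewrite Hj; cbn; do 2 f_equal; lia.
  - rewrite Hg; cbn; do 2 f_equal; lia.
  - rewrite H2; do 2 f_equal; lia.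
Qed.

End Configuration.

Definition enum_T (n : nat) : list tile :=
  flat_map (fun i => map (w_tile n i) (seq 1 n)) (seq 1 n)
  ++ map (b_tile n) (seq 0 (S (n - 1)))
  ++ map (g_tile n) (seq 0 (S n))
  ++ map (y_tile n) (seq 1 n)
  ++ map (fun i => hat (b_tile n i)) (seq 0 (S (n - 1)))
  ++ map (fun i => hat (g_tile n i)) (seq 0 (S n))
  ++ map (fun i => hat (y_tile n i)) (seq 1 n)
  ++ [j_tile n 0 0 0 0; j_tile n 0 0 0 1; j_tile n 0 1 0 0; j_tile n 0 1 0 1;
      j_tile n 0 1 1 1; j_tile n 1 1 0 1; j_tile n 1 1 1 1].

Lemma in_map_seq {A} (f : nat -> A) start len i :
  start <= i < start + len -> In (f i) (map f (seq start len)).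
Proof. intro Hi; apply in_map, in_seq; exact Hi. Qed.

Lemma in_enum_T n t : in_T n t -> In t (enum_T n).
Proof.
  unfold enum_T; intro Ht; rewrite !in_app_iff.
  destruct Ht as [(i & j & Hi & Hj & ->) | [(i & Hi & ->) | [(i & Hi & ->) | [(i & Hi & ->) |
    [(u & (i & Hi & ->) & ->) | [(u & (i & Hi & ->) & ->) | [(u & (i & Hi & ->) & ->) |
    (k & l & r & s & Hkl & Hrs & Hex1 & Hex2 & ->)]]]]]]].
  - left; apply in_flat_map; exists i; split; [apply in_seq; lia | apply in_map_seq; lia].
  - do 1 right; left; apply in_map_seq; lia.
  - do 2 right; left; apply in_map_seq; lia.
  - do 3 right; left; apply in_map_seq; lia.
  - do 4 right; left; apply (in_map_seq (fun i => hat (b_tile n i))); lia.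
  - do 5 right; left; apply (in_map_seq (fun i => hat (g_tile n i))); lia.
  - do 6 right; left; apply (in_map_seq (fun i => hat (y_tile n i))); lia.
  - do 7 right; cbn.
    destruct Hkl as [[-> ->] | [[-> ->] | [-> ->]]];
      destruct Hrs as [[-> ->] | [[-> ->] | [-> ->]]]; tauto.
Qed.

Definition color_eqb (c d : color) : bool :=
  let '(c0, c1, c2) := c in let '(d0, d1, d2) := d in
  Nat.eqb c0 d0 && Nat.eqb c1 d1 && Nat.eqb c2 d2.

Lemma color_eqb_refl c : color_eqb c c = true.
Proof. destruct c as [[c0 c1] c2]; cbn; now rewrite !Nat.eqb_refl. Qed.

Definition domains : Type := list (list (list tile)).

Definition cell (D : domains) (c r : nat) : list tile := nth r (nth c D []) [].

Definition tabulate (w h : nat) (f : nat -> nat -> list tile) : domains :=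
  map (fun c => map (f c) (seq 0 h)) (seq 0 w).

Lemma nth_map_seq {A} (f : nat -> A) len i d : i < len -> nth i (map f (seq 0 len)) d = f i.
Proof.
  intro Hi; rewrite nth_indep with (d' := f 0) by (rewrite length_map, length_seq; lia).
  rewrite map_nth, seq_nth by lia; reflexivity.
Qed.

Lemma cell_tabulate w h f c r : c < w -> r < h -> cell (tabulate w h f) c r = f c r.
Proof. intros Hc Hr; unfold cell, tabulate; now rewrite !nth_map_seq. Qed.

Definition supported (w h : nat) (D : domains) (c r : nat) (t : tile) : bool :=
  implb (c + 1 <? w) (existsb (fun u => color_eqb (RIGHT t) (LEFT u)) (cell D (c + 1) r)) &&
  match c with 0 => true | S c' =>
    existsb (fun u => color_eqb (LEFT t) (RIGHT u)) (cell D c' r) end &&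
  implb (r + 1 <? h) (existsb (fun u => color_eqb (TOP t) (BOTTOM u)) (cell D c (r + 1))) &&
  match r with 0 => true | S r' =>
    existsb (fun u => color_eqb (BOTTOM t) (TOP u)) (cell D c r') end.

Definition prune (w h : nat) (D : domains) : domains :=
  tabulate w h (fun c r => filter (supported w h D c r) (cell D c r)).

Definition has_empty_cell (w h : nat) (D : domains) : bool :=
  existsb (fun c => existsb (fun r => match cell D c r with [] => true | _ => false end)
    (seq 0 h)) (seq 0 w).

Section Window.
Variables (n : nat) (x : Z * Z -> tile).
Hypothesis Hx : in_Omega n x.
Variables (w h : nat) (a0 b0 : Z).

Definition at_cell (c r : nat) : tile := x (a0 + Z.of_nat c, b0 + Z.of_nat r)%Z.

Lemma RIGHT_at_cell c r : RIGHT (at_cell c r) = LEFT (at_cell (S c) r).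
Proof.
  unfold at_cell; rewrite Nat2Z.inj_succ, <- Z.add_1_r, Z.add_assoc; apply Hx.
Qed.

Lemma TOP_at_cell c r : TOP (at_cell c r) = BOTTOM (at_cell c (S r)).
Proof.
  unfold at_cell; rewrite Nat2Z.inj_succ, <- Z.add_1_r, Z.add_assoc; apply Hx.
Qed.

Definition covers (D : domains) : Prop :=
  forall c r, c < w -> r < h -> In (at_cell c r) (cell D c r).

Lemma existsb_color_eqb (f : tile -> color) col u us :
  In u us -> col = f u -> existsb (fun v => color_eqb col (f v)) us = true.
Proof. intros Hu ->; apply existsb_exists; exists u; split; [exact Hu | apply color_eqb_refl]. Qed.

Lemma covers_prune D : covers D -> covers (prune w h D).
Proof.
  intros HD c r Hc Hr; unfold prune; rewrite cell_tabulate by assumption.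
  apply filter_In; split; [now apply HD |].
  unfold supported; rewrite !andb_true_iff; repeat split.
  - destruct (Nat.ltb_spec (c + 1) w); [| reflexivity]; cbn.
    apply existsb_color_eqb with (at_cell (S c) r);
      [rewrite <- Nat.add_1_r; apply HD; lia | apply RIGHT_at_cell].
  - destruct c as [| c']; [reflexivity |].
    apply existsb_color_eqb with (at_cell c' r);
      [apply HD; lia | symmetry; apply RIGHT_at_cell].
  - destruct (Nat.ltb_spec (r + 1) h); [| reflexivity]; cbn.
    apply existsb_color_eqb with (at_cell c (S r));
      [rewrite <- Nat.add_1_r; apply HD; lia | apply TOP_at_cell].
  - destruct r as [| r']; [reflexivity |].
    apply existsb_color_eqb with (at_cell c r');
      [apply HD; lia | symmetry; apply TOP_at_cell].
Qed.

Lemma covers_iter_prune k D : covers D -> covers (Nat.iter k (prune w h) D).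
Proof. induction k; cbn; auto using covers_prune. Qed.

Lemma covers_has_empty_cell D : covers D -> has_empty_cell w h D = false.
Proof.
  intro HD; apply not_true_iff_false; unfold has_empty_cell; intro Hempty.
  apply existsb_exists in Hempty as (c & Hc & Hempty).
  apply existsb_exists in Hempty as (r & Hr & Hempty).
  apply in_seq in Hc, Hr.
  specialize (HD c r ltac:(lia) ltac:(lia)).
  destruct (cell D c r); [contradiction | discriminate].
Qed.

End Window.

Definition window_j0111_over_hat_g1 : domains :=
  tabulate 12 7 (fun c r =>
    if (c =? 7) && (r =? 4) then [j_tile 2 0 1 1 1]
    else if (c =? 7) && (r =? 3) then [hat (g_tile 2 1)]
    else enum_T 2).

Lemma window_j0111_over_hat_g1_refuted :
  has_empty_cell 12 7 (Nat.iter 17 (prune 12 7) window_j0111_over_hat_g1) = true.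
Proof. vm_compute; reflexivity. Qed.

Lemma j0111_over_hat_g1_absurd_n2 x a b :
  in_Omega 2 x -> x (a, b) = j_tile 2 0 1 1 1 -> x (a, (b - 1)%Z) = hat (g_tile 2 1) -> False.
Proof.
  intros Hx Hj Hg.
  assert (Hcov : covers x 12 7 (a - 7) (b - 4) window_j0111_over_hat_g1).
  { intros c r Hc Hr; unfold window_j0111_over_hat_g1; rewrite cell_tabulate by assumption.
    destruct (Nat.eqb_spec c 7) as [-> |]; [destruct (Nat.eqb_spec r 4) as [-> |] |].
    - left; rewrite <- Hj; unfold at_cell; f_equal; f_equal; lia.
    - destruct (Nat.eqb_spec r 3) as [-> |]; [| apply in_enum_T, Hx].
      left; rewrite <- Hg; unfold at_cell; f_equal; f_equal; lia.
    - apply in_enum_T, Hx. }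
  pose proof (covers_has_empty_cell _ _ _ _ _ _ (covers_iter_prune _ _ Hx _ _ _ _ 17 _ Hcov)) as H.
  now rewrite window_j0111_over_hat_g1_refuted in H.
Qed.

Theorem lemma10p7 (n : nat) (hn : 2 <= n) :
  forall x : Z * Z -> tile, in_Omega n x ->
  forall a b : Z,
    ~ (x (a, b) = j_tile n 1 1 1 1 /\ x (a, (b - 1)%Z) = hat (g_tile n n)) /\
    ~ (x (a, b) = j_tile n 0 1 1 1 /\ x (a, (b - 1)%Z) = hat (g_tile n (n - 1))).
Proof.
  intros x Hx a b; split; intros [Hj Hg].
  - exact (j_over_hat_g_absurd n x Hx a b 1 1 n ltac:(lia) Hj Hg).
  - destruct (Nat.eq_dec n 2) as [-> | Hn2].
    + exact (j0111_over_hat_g1_absurd_n2 x a b Hx Hj Hg).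
    + exact (j_over_hat_g_absurd n x Hx a b 0 1 (n - 1) ltac:(lia) Hj Hg).
Qed.
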